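(* For odd $N\ge5$ let $G_{N,1}$ be the graph with vertex set $\mathbb Z_N$ in which two distinct vertices $i,j$ are adjacent iff $j-i\not\equiv\pm1\pmod N$. Fix an integer $q\ge 1$ independent of $N$, and for each $N$ let $u,v\in\mathbb Z_N$ with $v-u\equiv q\pmod N$. Then the effective resistance $R^{(1)}(u,v)$ in $G_{N,1}$ satisfies \[ R^{(1)}(u,v)\sim\frac{2}{N}\qquad (N\to\infty \text{ through odd integers}). \]
   Context: Effective resistance is computed with unit conductance on every edge; $a_N\sim b_N$ means $a_N/b_N\to1$. *)

From HB Require Import structures.
From mathcomp Require Import all_boot all_order all_algebra.
From mathcomp Require Import reals.
Set Implicit Arguments. Unset Strict Implicit. Unset Printing Implicit Defensive.
Import Order.TTheory GRing.Theory Num.Theory.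
Local Open Scope ring_scope.

Definition adjG1 (N : nat) (i j : 'I_N) : bool :=
  [&& i != j, ((j + N - i) %% N)%N != 1%N & ((i + N - j) %% N)%N != 1%N].

Definition laplacian (R : fieldType) (N : nat) (adj : 'I_N -> 'I_N -> bool)
  : 'M[R]_N :=
  \matrix_(i, j) (if i == j then (#|[set k | adj i k]|)%:R
                  else - ((adj i j)%:R)).

(* Here pinvmx is a
   generalized inverse of L; for b in the range of L (connected graph) the
   quadratic form b X b^T does not depend on the choice of generalized
   inverse X, so this is the usual effective resistance (= potential
   difference phi u - phi v of any solution of L phi = e_u - e_v). *)
Definition eff_res (R : fieldType) (N : nat) (adj : 'I_N -> 'I_N -> bool)
  (u v : 'I_N) : R :=
  let b : 'rV[R]_N := delta_mx 0 u - delta_mx 0 v in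
  (b *m pinvmx (laplacian R adj) *m b^T) 0 0.

From HB Require Import structures.
From mathcomp Require Import all_boot all_order all_algebra.
From mathcomp Require Import reals.
From mathcomp Require Import zify ring lra.
Import Order.TTheory GRing.Theory Num.Theory.
Set Implicit Arguments. Unset Strict Implicit. Unset Printing Implicit Defensive.
Local Open Scope ring_scope.

(* Let L and Lc be the Laplacians of G = G_{N,1} and of its complement, the
   N-cycle, and J the all-ones matrix.  Then L + J = N I - Lc.  Every row of
   Lc has absolute sum at most 4, so N I - Lc obeys a maximum principle: the
   solution y of y (N I - Lc) = e_u - e_v has entries of size at most
   1/(N-4).  This y also solves y L = e_u - e_v, hence
   R(u,v) = y_u - y_v = (2 + (y Lc)_u - (y Lc)_v) / N with |(y Lc)_w| <= 4/(N-4),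
   i.e. |R(u,v) N/2 - 1| <= 4/(N-4).  The argument only uses that the
   complement has bounded degree d (with 2d in place of 4). *)

Definition compl_adj N (adj : rel 'I_N) : rel 'I_N := fun i j => (i != j) && ~~ adj i j.

Definition deg N (adj : rel 'I_N) (i : 'I_N) : nat := #|[set k | adj i k]|.

Section Laplacian.
Variables (R : fieldType) (N : nat) (adj : rel 'I_N).
Hypotheses (adj_sym : symmetric adj) (adj_irr : irreflexive adj).

Lemma compl_adj_sym : symmetric (compl_adj adj).
Proof. by move=> i j; rewrite /compl_adj eq_sym adj_sym. Qed.

Lemma compl_adj_irr : irreflexive (compl_adj adj).
Proof. by move=> i; rewrite /compl_adj eqxx. Qed.

Lemma deg_natr (i : 'I_N) : (deg adj i)%:R = \sum_k (adj i k)%:R :> R.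
Proof.
rewrite /deg -sum1_card natr_sum big_mkcond /=; apply: eq_bigr => k _.
by rewrite inE; case: (adj i k).
Qed.

Lemma deg_add_deg_compl (i : 'I_N) : (deg adj i + deg (compl_adj adj) i).+1 = N.
Proof.
have disj : [set k | adj i k] :&: [set k | compl_adj adj i k] = set0.
  by apply/setP => k; rewrite !inE /compl_adj; case: (adj i k); rewrite ?andbF.
have cover : [set k | adj i k] :|: [set k | compl_adj adj i k] = [set~ i].
  apply/setP => k; rewrite !inE /compl_adj eq_sym.
  by case: eqVneq => [->|]; rewrite ?adj_irr //; case: (adj i k).
rewrite /deg -cardsUI disj cards0 addn0 cover cardsC1 card_ord.
by rewrite prednK // (leq_ltn_trans (leq0n i) (ltn_ord i)).
Qed.

Lemma laplacian_sym : (laplacian R adj)^T = laplacian R adj.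
Proof.
by apply/matrixP => i j; rewrite !mxE eq_sym adj_sym; case: eqVneq => // ->.
Qed.

Lemma laplacian_mul_const1 : laplacian R adj *m (const_mx 1 : 'cV_N) = 0.
Proof.
apply/matrixP => i j; rewrite !mxE (bigD1 i) //= !mxE eqxx mulr1.
rewrite -[#|_|]/(deg adj i) deg_natr (bigD1 i) //= adj_irr add0r -big_split.
rewrite big1 // => k ki.
by rewrite !mxE eq_sym (negbTE ki) mulr1 /= subrr.
Qed.

Lemma laplacian_add_const1 :
  laplacian R adj + const_mx 1 = N%:R%:M - laplacian R (compl_adj adj).
Proof.
apply/matrixP => i j; rewrite !mxE.
case: (eqVneq i j) => [->|ij].
  have := congr1 (fun n => n%:R : R) (deg_add_deg_compl j).
  by rewrite mulr1n -addn1 !natrD => <-; rewrite /deg; ring.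
by rewrite /compl_adj ij /=; case: (adj i j); rewrite /= ?mulr1n ?mulr0n; ring.
Qed.

Lemma eff_res_potential (u v : 'I_N) (y : 'rV[R]_N) :
  y *m laplacian R adj = delta_mx 0 u - delta_mx 0 v ->
  eff_res R adj u v = y 0 u - y 0 v.
Proof.
rewrite /eff_res => yL; rewrite -yL.
have -> : (y *m laplacian R adj)^T = laplacian R adj *m y^T.
  by rewrite trmx_mul laplacian_sym.
by rewrite mulmxA mulmxKpV ?submxMl // yL mulmxBl -!rowE !mxE.
Qed.

End Laplacian.

Lemma const1_mul_const1 (R : pzSemiRingType) N :
  (const_mx 1 : 'M[R]_N) *m (const_mx 1 : 'cV_N) = N%:R *: const_mx 1.
Proof.
apply/matrixP => i j; rewrite !mxE.
by under eq_bigr do rewrite !mxE mulr1; rewrite sumr_const card_ord mulr1.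
Qed.

Lemma mul_laplacian_of_add_const1 (R : numFieldType) N (adj : rel 'I_N)
    (adj_irr : irreflexive adj) (u v : 'I_N) (y : 'rV[R]_N) :
  y *m (laplacian R adj + const_mx 1) = delta_mx 0 u - delta_mx 0 v ->
  y *m laplacian R adj = delta_mx 0 u - delta_mx 0 v.
Proof.
move=> yM; set one : 'cV[R]_N := const_mx 1.
have N_gt0 : (0 < N)%N by apply: leq_ltn_trans (ltn_ord u).
have y_one : y *m one = 0.
  (* Right multiplication by [one] kills [laplacian R adj] and [e_u - e_v],
     leaving [N *: (y *m one) = 0]. *)
  have := congr1 (mulmx^~ one) yM.
  rewrite -mulmxA mulmxDl laplacian_mul_const1 // add0r const1_mul_const1.
  rewrite -scalemxAr mulmxBl -!rowE !row_const subrr => /eqP.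
  by rewrite scalemx_eq0 pnatr_eq0 gtn_eqF // => /eqP.
have yJ : y *m (const_mx 1 : 'M_N) = 0.
  apply/rowP => j; rewrite [RHS]mxE; transitivity ((y *m one) 0 0).
    by rewrite !mxE; apply: eq_bigr => i _; rewrite !mxE.
  by rewrite y_one mxE.
by rewrite -yM mulmxDr yJ addr0.
Qed.

Section MaximumPrinciple.
Variables (R : realFieldType) (N d : nat) (adj : rel 'I_N).
Hypotheses (adj_sym : symmetric adj) (adj_irr : irreflexive adj)
  (deg_le : forall i, (deg adj i <= d)%N).

Lemma norm_laplacian (i j : 'I_N) :
  `|laplacian R adj i j| = (i == j)%:R * (deg adj j)%:R + (adj j i)%:R.
Proof.
rewrite mxE adj_sym; case: eqVneq => [->|_].
  by rewrite adj_irr normr_nat mul1r addr0.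
by rewrite normrN normr_nat mul0r add0r.
Qed.

Lemma norm_mul_laplacian_le (y : 'rV[R]_N) (c : R) :
  (forall i, `|y 0 i| <= c) -> forall j, `|(y *m laplacian R adj) 0 j| <= 2 * d%:R * c.
Proof.
move=> y_le j; have c_ge0 : 0 <= c := le_trans (normr_ge0 _) (y_le j).
rewrite mxE; apply: le_trans (ler_norm_sum _ _ _) _.
apply: (@le_trans _ _ (\sum_i c * `|laplacian R adj i j|)).
  by apply: ler_sum => i _; rewrite normrM ler_wpM2r.
rewrite -mulr_sumr; under eq_bigr do rewrite norm_laplacian.
rewrite big_split /= (bigD1 j) //= big1 => [|i /negbTE ->]; last by rewrite mul0r.
rewrite eqxx mul1r addr0 -deg_natr mulrC ler_wpM2r //.
by have := deg_le j; rewrite -(ler_nat R); lra.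
Qed.

Lemma max_principle (y b : 'rV[R]_N) (beta : R) :
  y *m (N%:R%:M - laplacian R adj) = b -> (forall i, `|b 0 i| <= beta) ->
  forall i, `|y 0 i| * (N%:R - 2 * d%:R) <= beta.
Proof.
move=> yM b_le i.
have [j _ y_max] := @arg_maxP _ _ _ i xpredT (fun k => `|y 0 k|) isT.
have {}y_max k : `|y 0 k| <= `|y 0 j| := y_max k isT.
have L_le := norm_mul_laplacian_le y_max j.
have yj_le : N%:R * `|y 0 j| <= beta + 2 * d%:R * `|y 0 j|.
  rewrite -normr_nat -normrM -[N%:R * _](subrK ((y *m laplacian R adj) 0 j)).
  apply: le_trans (ler_normD _ _) (lerD _ L_le).
  by have := b_le j; rewrite -yM mulmxBr mul_mx_scalar !mxE.
have := y_max i; have := normr_ge0 (y 0 i); have := le_trans (normr_ge0 _) (b_le i).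
by have [s|s] := leP 0 (N%:R - 2 * d%:R : R); nra.
Qed.

Lemma shifted_laplacian_unit : (2 * d < N)%N -> N%:R%:M - laplacian R adj \in unitmx.
Proof.
move=> dN; rewrite -row_free_unit -kermx_eq0; apply/rowV0P => y /sub_kermxP yM.
have dN' : 2 * d%:R < N%:R :> R by rewrite -natrM ltr_nat.
have zero_le k : `|(0 : 'rV[R]_N) 0 k| <= 0 by rewrite mxE normr0.
apply/rowP => i; have := max_principle yM zero_le i.
by rewrite !mxE pmulr_lle0 ?subr_gt0 // normr_le0 => /eqP.
Qed.

End MaximumPrinciple.

Theorem eff_res_sparse_complement (R : realFieldType) N d (adj : rel 'I_N)
    (adj_sym : symmetric adj) (adj_irr : irreflexive adj)
    (compl_deg_le : forall i, (deg (compl_adj adj) i <= d)%N) (dN : (2 * d < N)%N)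
    (u v : 'I_N) :
  u != v -> `|eff_res R adj u v / (2 / N%:R) - 1| <= 2 * d%:R / (N%:R - 2 * d%:R).
Proof.
move=> uv; set b : 'rV[R]_N := delta_mx 0 u - delta_mx 0 v.
set Lc := laplacian R (compl_adj adj).
have csym := compl_adj_sym adj_sym; have cirr := compl_adj_irr adj.
have dN' : 2 * d%:R < N%:R :> R by rewrite -natrM ltr_nat.
have N_neq0 : N%:R != 0 :> R by rewrite pnatr_eq0 gtn_eqF //; lia.
have [y yM] : exists y, y *m (N%:R%:M - Lc) = b.
  exists (b *m invmx (N%:R%:M - Lc)).
  by rewrite mulmxKV // (shifted_laplacian_unit R csym cirr compl_deg_le).
have -> : eff_res R adj u v = y 0 u - y 0 v.
  apply: (eff_res_potential adj_sym); apply: (mul_laplacian_of_add_const1 adj_irr).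
  by rewrite laplacian_add_const1.
have yE k : y 0 k = (b 0 k + (y *m Lc) 0 k) / N%:R.
  have NyE : N%:R *: y = b + y *m Lc by rewrite -yM mulmxBr mul_mx_scalar subrK.
  have := congr1 (fun M : 'rV_N => M 0 k) NyE; rewrite mxE [X in _ = X]mxE => <-.
  by rewrite [N%:R * _]mulrC mulfK.
have bu : b 0 u = 1 by rewrite !mxE !eqxx (negbTE uv) subr0.
have bv : b 0 v = -1 by rewrite !mxE !eqxx eq_sym (negbTE uv) sub0r.
have b_le k : `|b 0 k| <= 1.
  rewrite !mxE eqxx /=; case: (k == u); case: (k == v);
  by rewrite /= ?subrr ?subr0 ?sub0r ?normrN ?normr1 ?normr0.
have y_le k : `|y 0 k| <= 1 / (N%:R - 2 * d%:R).
  by rewrite ler_pdivlMr ?subr_gt0 // (max_principle csym cirr compl_deg_le yM b_le).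
have Lu := norm_mul_laplacian_le csym cirr compl_deg_le y_le u.
have Lv := norm_mul_laplacian_le csym cirr compl_deg_le y_le v.
have -> : (y 0 u - y 0 v) / (2 / N%:R) - 1 = ((y *m Lc) 0 u - (y *m Lc) 0 v) / 2.
  by rewrite !yE bu bv; field.
have -> : 2 * d%:R / (N%:R - 2 * d%:R) = 2 * d%:R * (1 / (N%:R - 2 * d%:R)) :> R.
  by rewrite mulrA mulr1.
move: Lu Lv; rewrite -/Lc; set k := 2 * d%:R * _.
rewrite !ler_norml => /andP[Lu1 Lu2] /andP[Lv1 Lv2]; apply/andP; split; lra.
Qed.

Lemma modn_lt_double m N : (m < N + N)%N -> (m %% N = if m < N then m else m - N)%N.
Proof.
move=> m_lt; case: ltnP => [m_ltN|N_le]; first by rewrite modn_small.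
by rewrite -(subnK N_le) modnDr modn_small ?addnK //; lia.
Qed.

Lemma adjG1_sym N : symmetric (@adjG1 N).
Proof. by move=> i j; rewrite /adjG1 eq_sym [X in _ && X]andbC. Qed.

Lemma adjG1_irr N : irreflexive (@adjG1 N).
Proof. by move=> i; rewrite /adjG1 eqxx. Qed.

Lemma compl_adjG1_cycle N (i j : 'I_N) :
  compl_adj (@adjG1 N) i j -> (val j = i.+1 %% N)%N \/ (val j = (i + N.-1) %% N)%N.
Proof.
rewrite /compl_adj /adjG1 => /andP[ij]; rewrite ij /= negb_and !negbK.
have ij' : nat_of_ord i <> j by move=> /val_inj; apply/eqP.
move: (ltn_ord i) (ltn_ord j) => i_lt j_lt /orP[] /eqP.
all: by rewrite !modn_lt_double; try lia; repeat case: ifP; lia.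
Qed.

Lemma deg_compl_adjG1_le N (i : 'I_N) : (deg (compl_adj (@adjG1 N)) i <= 2)%N.
Proof.
have N_gt0 : (0 < N)%N by apply: leq_ltn_trans (ltn_ord i).
pose a := Ordinal (ltn_pmod i.+1 N_gt0); pose b := Ordinal (ltn_pmod (i + N.-1) N_gt0).
apply: leq_trans (subset_leq_card (_ : _ \subset [set a; b])) _.
  apply/subsetP => j; rewrite !inE => /compl_adjG1_cycle[] e; apply/orP.
    by left; apply/eqP/val_inj.
  by right; apply/eqP/val_inj.
by rewrite cards2 ltnS leq_b1.
Qed.

Lemma neq_of_modn_add N (u v : 'I_N) q :
  (0 < q < N)%N -> (v == u + q %[mod N])%N -> u != v.
Proof.
move=> q_bd; apply: contraTneq => <-.
rewrite modn_small // modn_lt_double; last by have := ltn_ord u; lia.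
by case: ifP; lia.
Qed.

Lemma eventually_div_lt (R : archiRealFieldType) (c eps : R) (k : nat) : 0 < eps ->
  exists N0, forall N, (N0 <= N)%N -> c / (N%:R - k%:R) < eps.
Proof.
move=> eps_gt0; exists ((Num.truncn (c / eps)).+1 + k)%N => N N_ge.
have Nk : (Num.truncn (c / eps)).+1%:R <= N%:R - k%:R :> R.
  by rewrite lerBrDr -natrD ler_nat.
rewrite ltr_pdivrMr; last by apply: lt_le_trans Nk; rewrite ltr0n.
by rewrite mulrC -ltr_pdivrMr //; apply: lt_le_trans Nk; exact: truncnS_gt.
Qed.

Theorem mainTheorem11 (R : realType) (q : nat) (hq : (1 <= q)%N) :
  forall eps : R, 0 < eps ->
  exists N0 : nat, forall (N : nat), (5 <= N)%N -> odd N -> (N0 <= N)%N ->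
    forall u v : 'I_N, (v == u + q %[mod N])%N ->
      `| eff_res R (@adjG1 N) u v / (2 / N%:R) - 1 | < eps.
Proof.
move=> eps eps_gt0; have [N0 N0_ok] := eventually_div_lt 4 4 eps_gt0.
exists (N0 + q.+1)%N => N N_ge5 _ N_ge u v uv_q.
have uv : u != v by apply: (neq_of_modn_add (q := q)) => //; rewrite hq; lia.
apply: le_lt_trans (eff_res_sparse_complement R (@adjG1_sym N) (@adjG1_irr N)
  (@deg_compl_adjG1_le N) _ uv) _; first by lia.
by rewrite -natrM; apply: N0_ok; lia.
Qed.
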